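(* Let $(S,\le)$ be a well-quasi-order and $k\in\mathbb{N}$. The set of all finite $k$-path bounded $S$-graphs, ordered by the induced subgraph ordering $\sqsubseteq$, is a well-quasi-order.
   Context: An $S$-graph is a finite undirected graph $(V,E,L)$ with labelling $L:V\to S$. For $S$-graphs $\theta_1=(V_1,E_1,L_1)$, $\theta_2=(V_2,E_2,L_2)$, $\theta_1\sqsubseteq\theta_2$ iff there is an injection $h:V_1\to V_2$ such that for all $u,v\in V_1$: $(u,v)\in E_1\iff(h(u),h(v))\in E_2$, and $L_1(u)\le L_2(h(u))$. A graph is $k$-path bounded if its longest simple path has length at most $k$. *)

From mathcomp Require Import all_boot.
Set Implicit Arguments. Unset Strict Implicit. Unset Printing Implicit Defensive.

Definition wqo_on (T : Type) (P : T -> Prop) (R : T -> T -> Prop) : Prop :=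
  (forall x, P x -> R x x) /\
  (forall x y z, P x -> P y -> P z -> R x y -> R y z -> R x z) /\
  (forall f : nat -> T, (forall i, P (f i)) ->
     exists i j, (i < j)%N /\ R (f i) (f j)).

Definition wqo (T : Type) (R : T -> T -> Prop) : Prop :=
  wqo_on (fun _ : T => True) R.

Record sgraph (S : Type) := SGraph {
  nv : nat;
  adj : rel 'I_nv;
  lab : 'I_nv -> S }.

Definition undirected (S : Type) (g : sgraph S) : Prop :=
  symmetric (@adj S g) /\ irreflexive (@adj S g).

Definition sg_le (S : Type) (le : S -> S -> Prop) (g1 g2 : sgraph S) : Prop :=
  exists h : 'I_(nv g1) -> 'I_(nv g2),
    injective h /\
    (forall u v, @adj S g1 u v = @adj S g2 (h u) (h v)) /\
    (forall u, le (@lab S g1 u) (@lab S g2 (h u))).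

(* every simple path x :: p (distinct vertices, consecutive adjacent)
   has length (number of edges) size p at most k *)
Definition path_bounded (S : Type) (k : nat) (g : sgraph S) : Prop :=
  forall (x : 'I_(nv g)) (p : seq 'I_(nv g)),
    path (@adj S g) x p -> uniq (x :: p) -> (size p <= k)%N.

Definition kpb_sgraph (S : Type) (k : nat) (g : sgraph S) : Prop :=
  undirected g /\ path_bounded k g.

From Stdlib Require Import Classical ClassicalEpsilon.
From mathcomp Require Import all_boot.
Set Implicit Arguments. Unset Strict Implicit. Unset Printing Implicit Defensive.

(* If every simple path of a graph has at most k edges, a depth-first decomposition yields a
   rooted forest of height at most k+1 in which every edge joins a vertex to one of its
   ancestors.  Relabel each vertex by its S-label together with the bit vector of its
   adjacencies to its ancestors: these labels form a wqo (a product with a finite set), so by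
   Higman's lemma, applied once per level, the relabelled forests are well-quasi-ordered by
   root-preserving embeddings.  Such an embedding matches ancestors with ancestors and
   preserves the bit vectors, hence it is an induced subgraph embedding dominating labels. *)

Fixpoint all_prop (A : Type) (P : A -> Prop) (s : seq A) : Prop :=
  if s is x :: s' then P x /\ all_prop P s' else True.

Lemma all_prop_map (A B : Type) (Q : A -> Prop) (P : B -> Prop) (f : A -> B) s :
  (forall x, Q x -> P (f x)) -> all_prop Q s -> all_prop P (map f s).
Proof. by move=> QP; elim: s => //= x s IHs [Qx Qs]; split; auto. Qed.

Lemma classic_ex_minn (Q : nat -> Prop) :
  (exists n, Q n) -> exists2 n, Q n & forall m, Q m -> n <= m.
Proof.
move=> [n Qn]; pose q m := if excluded_middle_informative (Q m) then true else false.
have qP m : reflect (Q m) (q m).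
  by rewrite /q; case: excluded_middle_informative => ?; constructor.
have exq : exists m, q m by exists n; apply/qP.
by case: (ex_minnP exq) => m /qP Qm minm; exists m => // k /qP; apply: minm.
Qed.

Lemma ex_increasing_chain (D : nat -> Prop) (Q : nat -> nat -> Prop) n0 :
  D n0 -> (forall n, D n -> exists m, [/\ n < m, D m & Q n m]) ->
  exists phi : nat -> nat, forall i, [/\ D (phi i), phi i < phi i.+1 & Q (phi i) (phi i.+1)].
Proof.
move=> Dn0 step; pose next n := epsilon (inhabits 0) (fun m => D n -> [/\ n < m, D m & Q n m]).
have nextP n : D n -> [/\ n < next n, D (next n) & Q n (next n)].
  apply: (epsilon_spec (inhabits 0) (fun m => D n -> [/\ n < m, D m & Q n m])).
  case: (classic (D n)) => [/step[m Hm]|nDn]; first by exists m.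
  by exists 0.
pose phi i := iter i next n0.
have Dphi : forall i, D (phi i) by elim => //= i IHi; case: (nextP _ IHi).
by exists phi => i; have [? ? ?] := nextP _ (Dphi i).
Qed.

Section SeqEmb.
Variables (A B : Type) (R : A -> B -> Prop).

Fixpoint seq_emb (xs : seq A) (ys : seq B) {struct ys} : Prop :=
  match xs, ys with
  | [::], _ => True
  | _ :: _, [::] => False
  | x :: xs', y :: ys' => (R x y /\ seq_emb xs' ys') \/ seq_emb xs ys'
  end.

Lemma seq_emb0s ys : seq_emb [::] ys.
Proof. by case: ys. Qed.

Lemma seq_emb_consr xs y ys : seq_emb xs ys -> seq_emb xs (y :: ys).
Proof. by case: xs => //= x xs; right. Qed.

End SeqEmb.

Lemma seq_emb_map (A B C D : Type) (R : C -> D -> Prop) (f : A -> C) (g : B -> D) xs ys :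
  seq_emb R (map f xs) (map g ys) -> seq_emb (fun x y => R (f x) (g y)) xs ys.
Proof.
elim: ys xs => [|y ys IHys] [|x xs] //= [[Rxy emb_xs]|emb_xs].
  by left; split => //; apply: IHys.
by right; apply: (IHys (x :: xs)).
Qed.

Section WqoBasics.
Variables (A : Type) (P : A -> Prop) (R : A -> A -> Prop).
Hypothesis wqoR : wqo_on P R.

Lemma seq_emb_wqo_refl xs : all_prop P xs -> seq_emb R xs xs.
Proof.
have [reflR _] := wqoR; elim: xs => //= x xs IHxs [Px Pxs].
by left; split; [apply: reflR | apply: IHxs].
Qed.

Lemma seq_emb_wqo_trans xs ys zs : all_prop P xs -> all_prop P ys -> all_prop P zs ->
  seq_emb R xs ys -> seq_emb R ys zs -> seq_emb R xs zs.
Proof.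
have [_ [transR _]] := wqoR.
elim: zs xs ys => [|z zs IHzs] [|x xs] [|y ys] //= [Px Pxs] [Py Pys] [Pz Pzs] emb_xy.
case=> [[Ryz emb_yz]|emb_yz]; last by right; apply: (IHzs _ (y :: ys)).
case: emb_xy => [[Rxy emb_xy]|emb_xy].
  by left; split; [apply: (transR x y z) | apply: (IHzs xs ys)].
by right; apply: (IHzs _ ys).
Qed.

(* Otherwise the terms with no larger later term would contain a bad subsequence. *)
Lemma wqo_eventually_dominated (f : nat -> A) : (forall i, P (f i)) ->
  exists N, forall i, N <= i -> exists j, i < j /\ R (f i) (f j).
Proof.
move=> Pf; have [_ [_ goodR]] := wqoR; apply: NNPP => noN.
pose terminal i := forall j, i < j -> ~ R (f i) (f j).
have terminal_unbounded N : exists i, N <= i /\ terminal i.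
  apply: NNPP => noi; apply: noN; exists N => i Ni; apply: NNPP => noj.
  by apply: noi; exists i; split => // j ij Rij; apply: noj; exists j.
have [i0 [_ ti0]] := terminal_unbounded 0.
have [|phi phiP] := @ex_increasing_chain terminal (fun _ _ => True) i0 ti0.
  by move=> n _; have [m [nm tm]] := terminal_unbounded n.+1; exists m.
have phi_mono : {homo phi : i j / i < j}.
  by apply: homo_ltn; [exact: ltn_trans | by move=> i; case: (phiP i)].
have [i [j [ij Rij]]] := goodR (f \o phi) (fun i => Pf _).
by case: (phiP i) => tphi _ _; apply: (tphi (phi j) (phi_mono _ _ ij)).
Qed.

Lemma wqo_monotone_subseq (f : nat -> A) : (forall i, P (f i)) ->
  exists phi : nat -> nat,
    {homo phi : i j / i < j} /\ forall i j, i < j -> R (f (phi i)) (f (phi j)).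
Proof.
move=> Pf; have [_ [transR _]] := wqoR.
have [N dom] := wqo_eventually_dominated Pf.
have [|phi phiP] := @ex_increasing_chain (leq N) (fun i j => R (f i) (f j)) N (leqnn N).
  by move=> n Nn; have [m [nm Rnm]] := dom n Nn; exists m; split => //; apply: leq_trans (ltnW nm).
exists phi; split; first by apply: homo_ltn; [exact: ltn_trans | by move=> i; case: (phiP i)].
apply: (@homo_ltn _ phi (fun a b => R (f a) (f b))); last by move=> i; case: (phiP i).
by move=> b a c; apply: transR.
Qed.

End WqoBasics.

Section Higman.
Variables (A : Type) (P : A -> Prop) (R : A -> A -> Prop).
Hypothesis wqoR : wqo_on P R.

Definition bad_seq (f : nat -> seq A) :=
  (forall i, all_prop P (f i)) /\ forall i j, i < j -> ~ seq_emb R (f i) (f j).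

Definition has_prefix (f : nat -> seq A) (p : seq (seq A)) :=
  forall i, i < size p -> f i = nth [::] p i.

Definition min_next (p : seq (seq A)) (x : seq A) :=
  (exists f, [/\ bad_seq f, has_prefix f p & f (size p) = x]) /\
  forall f, bad_seq f -> has_prefix f p -> size x <= size (f (size p)).

Lemma ex_min_next p f : bad_seq f -> has_prefix f p -> exists x, min_next p x.
Proof.
move=> bad_f pre_f.
have [n [g [bad_g pre_g <-]] min_n] := classic_ex_minn
  (ex_intro (fun n => exists g, [/\ bad_seq g, has_prefix g p & size (g (size p)) = n]) _
    (ex_intro _ f (And3 bad_f pre_f erefl))).
exists (g (size p)); split; first by exists g.
by move=> h bad_h pre_h; apply: min_n; exists h.
Qed.

Definition next_term p := epsilon (inhabits [::]) (min_next p).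

Fixpoint min_prefix n :=
  if n is n'.+1 then rcons (min_prefix n') (next_term (min_prefix n')) else [::].

(* Nash-Williams' minimal bad sequence *)
Definition min_bad n := next_term (min_prefix n).

Lemma size_min_prefix n : size (min_prefix n) = n.
Proof. by elim: n => //= n IHn; rewrite size_rcons IHn. Qed.

Lemma nth_min_prefix n i : i < n -> nth [::] (min_prefix n) i = min_bad i.
Proof.
elim: n => // n IHn; rewrite ltnS leq_eqVlt /= nth_rcons size_min_prefix.
by case/orP => [/eqP ->|lt_in]; rewrite ?ltnn ?eqxx // lt_in IHn.
Qed.

Section MinimalBad.
Variables (f0 : nat -> seq A).
Hypothesis bad_f0 : bad_seq f0.

Lemma bad_min_prefix n : exists2 f, bad_seq f & has_prefix f (min_prefix n).
Proof.
elim: n => [|n [f bad_f pre_f]]; first by exists f0 => // i.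
have [[g [bad_g pre_g gn]] _] := epsilon_spec (inhabits [::]) _ (ex_min_next bad_f pre_f).
exists g => // i; rewrite size_rcons size_min_prefix ltnS leq_eqVlt /= nth_rcons.
rewrite size_min_prefix; case/orP => [/eqP ->|lt_in].
  by rewrite ltnn eqxx /next_term -gn size_min_prefix.
by rewrite lt_in pre_g ?size_min_prefix.
Qed.

Lemma min_next_min_prefix n : min_next (min_prefix n) (min_bad n).
Proof.
by have [f bad_f pre_f] := bad_min_prefix n; apply: epsilon_spec; apply: ex_min_next pre_f.
Qed.

Lemma min_bad_approx n : exists2 f, bad_seq f & forall i, i <= n -> f i = min_bad i.
Proof.
have [f bad_f pre_f] := bad_min_prefix n.+1.
by exists f => // i le_in; rewrite pre_f ?size_min_prefix // nth_min_prefix.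
Qed.

Lemma bad_min_bad : bad_seq min_bad.
Proof.
split=> [i | i j lt_ij].
  by have [[f [[Pf _] _ <-]] _] := min_next_min_prefix i; apply: Pf.
by have [f [_ bad_f] fE] := min_bad_approx j; rewrite -!fE ?(ltnW lt_ij) //; apply: bad_f.
Qed.

Lemma min_bad_minimal n f : bad_seq f -> (forall i, i < n -> f i = min_bad i) ->
  size (min_bad n) <= size (f n).
Proof.
move=> bad_f fE; have [_ /(_ f bad_f)] := min_next_min_prefix n.
rewrite size_min_prefix; apply=> i; rewrite size_min_prefix => lt_in.
by rewrite nth_min_prefix // fE.
Qed.

End MinimalBad.

Lemma bad_seq_tails (g : nat -> seq A) (x : nat -> A) (t : nat -> seq A) (phi : nat -> nat) :
  bad_seq g -> (forall n, g n = x n :: t n) -> {homo phi : i j / i < j} ->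
  (forall i j, i < j -> R (x (phi i)) (x (phi j))) ->
  bad_seq (fun n => if n < phi 0 then g n else t (phi (n - phi 0))).
Proof.
move=> [Pg bad_g] gE phi_mono Rx.
have phi0_min m : phi 0 <= phi m by case: m => // m; apply/ltnW/phi_mono.
split=> [i | i j lt_ij].
  by case: ifP => _; [apply: Pg | have := Pg (phi (i - phi 0)); rewrite gE => -[]].
case: ifP => lt_i; case: ifP => lt_j.
- exact: bad_g.
- move=> emb_ij; apply: (bad_g i (phi (j - phi 0))); first exact: leq_trans lt_i (phi0_min _).
  by rewrite [g (phi _)]gE; apply: seq_emb_consr.
- by move: (ltn_trans lt_ij lt_j); rewrite ltnNge leqNgt lt_i.
- move=> emb_ij; have lt_ij' : i - phi 0 < j - phi 0 by rewrite ltn_sub2rE // leqNgt lt_i.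
  by apply: (bad_g _ _ (phi_mono _ _ lt_ij')); rewrite !gE /=; left; split => //; apply: Rx.
Qed.

(* Beheading a subsequence of the minimal bad sequence along which the heads increase yields
   a bad sequence that agrees with it before [phi 0] but is shorter at [phi 0]. *)
Lemma no_bad_seq f : ~ bad_seq f.
Proof.
move=> bad_f; have [Pg bad_g] := bad_min_bad bad_f.
have g_cons n : min_bad n <> [::].
  by move=> gn; apply: (bad_g n n.+1 (ltnSn n)); rewrite gn; apply: seq_emb0s.
case: (min_bad 0) (g_cons 0) => [//|a0 _ _].
pose x n := head a0 (min_bad n); pose t n := behead (min_bad n).
have gE n : min_bad n = x n :: t n by rewrite /x /t; case: (min_bad n) (g_cons n).
have Px n : P (x n) by have := Pg n; rewrite gE => -[].
have [phi [phi_mono Rx]] := wqo_monotone_subseq wqoR Px.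
have tails_bad := bad_seq_tails (conj Pg bad_g) gE phi_mono Rx.
have same_prefix i :
  i < phi 0 -> (if i < phi 0 then min_bad i else t (phi (i - phi 0))) = min_bad i.
  by move=> ->.
have := @min_bad_minimal f bad_f (phi 0) _ tails_bad same_prefix.
by rewrite ltnn subnn [min_bad (phi 0)]gE /= ltnn.
Qed.

Theorem higman : wqo_on (all_prop P) (seq_emb R).
Proof.
split; first by move=> xs; apply: seq_emb_wqo_refl.
split; first by move=> xs ys zs; apply: seq_emb_wqo_trans.
move=> f Pf; apply: NNPP => no_good; apply: (@no_bad_seq f); split => // i j lt_ij emb_ij.
by apply: no_good; exists i, j.
Qed.

End Higman.

Inductive tree (A : Type) := Node of A & seq (tree A).

Section BoundedTrees.
Variables (A : Type) (P : A -> Prop) (R : A -> A -> Prop).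

Fixpoint tree_on (d : nat) (t : tree A) : Prop :=
  if d is d'.+1 then let: Node a ts := t in P a /\ all_prop (tree_on d') ts else False.

Fixpoint tree_emb (d : nat) (t u : tree A) : Prop :=
  if d is d'.+1 then
    let: Node a ts := t in let: Node b us := u in R a b /\ seq_emb (tree_emb d') ts us
  else False.

Lemma tree_emb_wqo d : wqo_on P R -> wqo_on (tree_on d) (tree_emb d).
Proof.
move=> wqoR; have [reflR [transR _]] := wqoR.
elim: d => [|d IHd]; first by do 2!split => //; move=> f /(_ 0).
have [reflE [transE goodE]] := higman IHd.
split; first by case=> a ts [Pa Pts]; split; [apply: reflR | apply: reflE].
split.
  case=> a ts [b us] [c vs] [Pa Pts] [Pb Pus] [Pc Pvs] [Rab emb_ab] [Rbc emb_bc].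
  by split; [apply: (transR a b c) | apply: (transE ts us vs)].
move=> f Pf; pose root n := let: Node a _ := f n in a.
pose kids n := let: Node _ ts := f n in ts.
have fE n : f n = Node (root n) (kids n) by rewrite /root /kids; case: (f n).
have Proot n : P (root n) by have := Pf n; rewrite fE => -[].
have Pkids n : all_prop (tree_on d) (kids n) by have := Pf n; rewrite fE => -[].
have [phi [phi_mono Rroot]] := wqo_monotone_subseq wqoR Proot.
have [i [j [lt_ij emb_ij]]] := goodE (kids \o phi) (fun n => Pkids _).
by exists (phi i), (phi j); split; [apply: phi_mono | rewrite !fE; split; [apply: Rroot|]].
Qed.

End BoundedTrees.

Lemma wqo_prod (A B : Type) (RA : A -> A -> Prop) (RB : B -> B -> Prop) :
  wqo RA -> wqo RB -> wqo (fun a b : A * B => RA a.1 b.1 /\ RB a.2 b.2).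
Proof.
move=> wqoA [reflB [transB goodB]]; have [reflA [transA _]] := wqoA.
split; first by move=> x _; split; [apply: reflA | apply: reflB].
split.
  move=> x y z _ _ _ [? ?] [? ?].
  by split; [apply: (transA _ y.1) | apply: (transB _ y.2)].
move=> f _.
have [phi [phi_mono RA_phi]] := wqo_monotone_subseq wqoA (f := fun n => (f n).1) (fun _ => I).
have [i [j [lt_ij RB_ij]]] := goodB (fun n => (f (phi n)).2) (fun _ => I).
by exists (phi i), (phi j); split; [apply: phi_mono | split; [apply: RA_phi|]].
Qed.

Lemma wqo_eq_finType (T : finType) : wqo (@eq T).
Proof.
do 2!split=> //; first by move=> x y z _ _ _ -> ->.
move=> f _; pose g (i : 'I_#|T|.+1) := f i.
have /injectivePn[i [j neq_ij gij]] : ~~ injectiveb g.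
  by apply/injectiveP => /leq_card; rewrite card_ord ltnn.
have [lt_ij|lt_ji|/val_inj eq_ij] := ltngtP i j; first by exists i, j.
  by exists j, i.
by rewrite eq_ij eqxx in neq_ij.
Qed.

Fixpoint tree_verts (T : Type) (t : tree T) : seq T :=
  let: Node v ts := t in v :: flatten (map (@tree_verts T) ts).

Definition forest_verts (T : Type) (ts : seq (tree T)) := flatten (map (@tree_verts T) ts).

Section EliminationForest.
Variables (T : finType) (e : rel T).
Hypothesis e_sym : symmetric e.

Fixpoint no_cross_edges (ts : seq (tree T)) : Prop :=
  if ts is t :: ts' then
    (forall x y, x \in tree_verts t -> y \in forest_verts ts' -> ~~ e x y) /\ no_cross_edges ts'
  else True.

(* An elimination tree of height at most [d]: the edges of [e] inside it only join a vertex
   to one of its ancestors. *)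
Fixpoint elim_tree (d : nat) (t : tree T) : Prop :=
  if d is d'.+1 then let: Node v ts := t in
    [/\ all_prop (elim_tree d') ts, uniq (v :: forest_verts ts) & no_cross_edges ts]
  else False.

Definition elim_forest d ts :=
  [/\ all_prop (elim_tree d) ts, uniq (forest_verts ts) & no_cross_edges ts].

Lemma elim_tree_uniq d t : elim_tree d t -> uniq (tree_verts t).
Proof. by case: d => // d; case: t => v ts /= []. Qed.

Lemma elim_forest_cons d t ts :
  elim_tree d t -> elim_forest d ts ->
  (forall x, x \in tree_verts t -> x \notin forest_verts ts) ->
  (forall x y, x \in tree_verts t -> y \in forest_verts ts -> ~~ e x y) ->
  elim_forest d (t :: ts).
Proof.
move=> elim_t [elim_ts uniq_ts cross_ts] disj no_edge; split => //.
rewrite /forest_verts /= cat_uniq (elim_tree_uniq elim_t) uniq_ts andbT.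
by apply/hasPn => x x_ts; apply: contraL x_ts; apply: disj.
Qed.

Definition induced (U : {set T}) : rel T := fun x y => [&& e x y, x \in U & y \in U].

Lemma induced_sym (U : {set T}) : symmetric (induced U).
Proof. by move=> x y; rewrite /induced e_sym [(x \in U) && _]andbC. Qed.

Lemma induced_sub (U X : {set T}) : U \subset X -> subrel (induced U) (induced X).
Proof. by move=> /subsetP sUX x y /and3P[exy xU yU]; rewrite /induced exy !sUX. Qed.

Lemma path_induced_mem (U : {set T}) x p : path (induced U) x p -> {subset p <= U}.
Proof.
elim: p x => //= y p IHp x /andP[/and3P[_ _ yU] path_p] z.
by rewrite inE => /predU1P[->|/(IHp _ path_p)].
Qed.

Lemma path_induced_restrict (U X : {set T}) x p :
  path (induced U) x p -> {subset x :: p <= X} -> path (induced X) x p.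
Proof.
elim: p x => //= y p IHp x /andP[/and3P[exy _ _] path_p] sub_X.
rewrite /induced exy !sub_X ?mem_head ?inE ?eqxx ?orbT //=.
by apply: IHp => // z zp; apply: sub_X; rewrite inE zp orbT.
Qed.

Definition short_paths (U : {set T}) r d :=
  forall p, path (induced U) r p -> uniq (r :: p) -> size p < d.

Definition component (U : {set T}) c := [set y | connect (induced U) c y].

Lemma component_sub (U : {set T}) c : c \in U -> component U c \subset U.
Proof.
move=> cU; apply/subsetP => y; rewrite inE => /connectP[p path_p ->].
by case: p path_p => // z p path_p; apply: (path_induced_mem path_p); rewrite /= mem_last.
Qed.

Lemma closed_component (U : {set T}) c : closed (induced U) (component U c).
Proof.
move=> x y exy; rewrite !inE.
exact: (connect_closed (sym_connect_sym (@induced_sym U)) c exy).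
Qed.

Lemma connect_component (U : {set T}) c y :
  y \in component U c -> connect (induced (component U c)) c y.
Proof.
rewrite inE => /connectP[p path_p ->]; apply/connectP; exists p => //.
apply: (path_induced_restrict path_p) => z.
rewrite inE => /predU1P[->|zp]; rewrite inE ?connect0 //.
by apply: (path_connect path_p); rewrite inE zp orbT.
Qed.

Definition elim_decomposable d := forall (U : {set T}) r, r \in U ->
  {in U, forall y, connect (induced U) r y} -> short_paths U r d ->
  exists2 t, elim_tree d t & tree_verts t =i U.

Lemma elim_tree_component d (U : {set T}) c : elim_decomposable d -> c \in U -> short_paths U c d ->
  exists2 t, elim_tree d t & tree_verts t =i component U c.
Proof.
move=> decD cU short_c; apply: (decD _ c); first by rewrite /component inE connect0.
  by move=> y; apply: connect_component.
by move=> p /(sub_path (induced_sub (component_sub cU))); apply: short_c.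
Qed.

Section ClosedForest.
Variables (d : nat) (U : {set T}) (root_ok : T -> Prop).
Hypothesis decD : elim_decomposable d.
Hypothesis short_roots : forall c, c \in U -> root_ok c -> short_paths U c d.

Lemma elim_forest_closed (W : {set T}) : W \subset U -> closed (induced U) W ->
  (forall w, w \in W -> exists2 c, c \in U /\ root_ok c & connect (induced U) c w) ->
  exists2 ts, elim_forest d ts & forest_verts ts =i W.
Proof.
elim: {W}_.+1 {-2}W (ltnSn #|W|) => // n IHn W ltWn sWU clW rootsW.
have [->|[w wW]] := set_0Vmem W; first by exists [::] => // x; rewrite inE.
have [c [cU ok_c] cw] := rootsW w wW; set C := component U c.
have CW : C \subset W.
  apply/subsetP => y; rewrite inE => cy.
  by rewrite -(closed_connect clW cy) (closed_connect clW cw).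
have CU := component_sub cU.
have [t elim_t tC] := elim_tree_component decD cU (short_roots cU ok_c).
have ltW'W : #|W :\: C| < #|W|.
  apply/proper_card/properP; split; first exact: subsetDl.
  by exists c; rewrite ?inE ?connect0 ?andbF //; apply: (subsetP CW); rewrite inE connect0.
have clW' : closed (induced U) (W :\: C).
  by move=> x y exy; rewrite !in_setD (@closed_component U c _ _ exy) (clW _ _ exy).
have [ts elim_ts tsW'] := IHn (W :\: C) (leq_trans ltW'W ltWn)
  (subset_trans (subsetDl _ _) sWU) clW' (fun w' w'W => rootsW w' (subsetP (subsetDl W C) _ w'W)).
exists (t :: ts).
  apply: elim_forest_cons => // [x|x y]; rewrite tC tsW' in_setD; first by move=> ->.
  move=> xC /andP[yC yW]; apply: contraNN yC => exy.
  by rewrite -(@closed_component U c x) // /induced exy (subsetP CU) // (subsetP sWU).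
move=> x; rewrite /forest_verts /= mem_cat -/(forest_verts ts) tC tsW' in_setD.
by case: (boolP (x \in component U c)) => [/(subsetP CW)->|].
Qed.

End ClosedForest.

Lemma short_paths_neighbour (U : {set T}) r c d :
  short_paths U r d.+1 -> r \in U -> c \in U :\ r -> e r c -> short_paths (U :\ r) c d.
Proof.
move=> short_r rU cU' erc p path_p uniq_p.
have cU : c \in U by move: cU'; rewrite in_setD1 => /andP[].
have r_cp : r \notin c :: p.
  apply/memPn => z; rewrite inE => /predU1P[->|/(path_induced_mem path_p)].
    by move: cU'; rewrite in_setD1 eq_sym => /andP[].
  by rewrite in_setD1 eq_sym => /andP[].
apply: (short_r (c :: p)); last by rewrite /= -cons_uniq /= r_cp.
by rewrite /= /induced erc rU cU; apply: sub_path (induced_sub (subsetDl U [set r])) _ _ path_p.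
Qed.

Lemma connect_via_neighbour (U : {set T}) r w : connect (induced U) r w -> w \in U :\ r ->
  exists2 c, c \in U :\ r /\ e r c & connect (induced (U :\ r)) c w.
Proof.
move=> /connectP[p path_p wE] wU'; case/shortenP: path_p wE => p' path_p' uniq_p' _ {p}wE.
case: p' path_p' uniq_p' wE => [_ _ wr|c p /= /andP[/and3P[erc _ cU] path_p]].
  by move: wU'; rewrite wr in_setD1 eqxx.
move=> /andP[r_cp _] wE.
have sub_U' : {subset c :: p <= U :\ r}.
  move=> z z_cp; rewrite in_setD1 (memPn r_cp) //=.
  by move: z_cp; rewrite inE => /predU1P[->|/(path_induced_mem path_p)].
exists c; first by split => //; apply: sub_U'; apply: mem_head.
by apply/connectP; exists p => //; apply: path_induced_restrict path_p sub_U'.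
Qed.

(* Depth-first: below the root [r] hang elimination trees of the components of [U :\ r],
   each rooted at a neighbour of [r], so a simple path from [r] bounds the height. *)
Lemma elim_decomposable_all d : elim_decomposable d.
Proof.
elim: d => [|d IHd] U r rU conn_r short_r; first by have := short_r [::] erefl erefl.
have closed_U' : closed (induced (U :\ r)) (U :\ r) by move=> x y /and3P[_ -> ->].
have roots w : w \in U :\ r -> exists2 c, c \in U :\ r /\ e r c & connect (induced (U :\ r)) c w.
  move=> wU'; apply: (connect_via_neighbour _ wU'); apply: conn_r.
  by move: wU'; rewrite in_setD1 => /andP[].
have [ts [elim_ts uniq_ts cross_ts] tsU'] := elim_forest_closed IHd
  (fun c cU' erc => short_paths_neighbour short_r rU cU' erc) (subxx _) closed_U' roots.
exists (Node r ts); first by split; rewrite //= uniq_ts andbT tsU' in_setD1 eqxx.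
by move=> x; rewrite /= inE tsU' in_setD1; case: eqVneq => // ->.
Qed.

Lemma elim_forest_of_short_paths k :
  (forall x p, path e x p -> uniq (x :: p) -> size p <= k) ->
  exists2 ts, elim_forest k.+1 ts & forall x, x \in forest_verts ts.
Proof.
move=> short_e.
have [|||ts elim_ts tsT] := @elim_forest_closed k.+1 setT (fun _ => True)
  (@elim_decomposable_all k.+1) _ setT (subxx _).
- move=> c _ _ p path_p uniq_p; rewrite ltnS; apply: short_e uniq_p.
  by apply: sub_path path_p => x y /and3P[].
- by move=> x y _; rewrite !inE.
- by move=> w _; exists w; rewrite ?inE ?connect0.
by exists ts => // x; rewrite tsT inE.
Qed.

End EliminationForest.

Section Encoding.
Variables (S : Type) (K : nat) (T : Type) (e : rel T) (lab : T -> S).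

Definition adj_code (A : seq T) (v : T) : {ffun 'I_K -> bool} :=
  [ffun i : 'I_K => nth false (map (e v) A) i].

(* Each vertex is relabelled by its label and its adjacency to its ancestors, nearest first. *)
Fixpoint encode (A : seq T) (t : tree T) : tree (S * {ffun 'I_K -> bool}) :=
  let: Node v ts := t in Node (lab v, adj_code A v) (map (encode (v :: A)) ts).

End Encoding.

Lemma encode_tree_on (S : Type) K (T : finType) (e : rel T) (lab : T -> S) d A t :
  elim_tree e d t -> tree_on (fun _ => True) d (encode K e lab A t).
Proof.
elim: d t A => [|d IHd] [v ts] A //= [elim_ts _ _]; split => //.
by apply: all_prop_map elim_ts => t' /IHd.
Qed.

Section Lift.
Variables (S : Type) (le : S -> S -> Prop) (K : nat).
Variables (T1 T2 : finType) (e1 : rel T1) (e2 : rel T2) (lab1 : T1 -> S) (lab2 : T2 -> S).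
Hypotheses (e1_sym : symmetric e1) (e2_sym : symmetric e2).
Hypotheses (e1_irr : irreflexive e1) (e2_irr : irreflexive e2).

Definition code_le (a b : S * {ffun 'I_K -> bool}) := le a.1 b.1 /\ a.2 = b.2.

Lemma adj_code_nth (A1 : seq T1) (A2 : seq T2) v1 v2 :
  adj_code K e1 A1 v1 = adj_code K e2 A2 v2 -> size A2 = size A1 -> size A1 <= K ->
  forall i, i < size A1 -> e1 v1 (nth v1 A1 i) = e2 v2 (nth v2 A2 i).
Proof.
move=> code_eq sizeA leAK i ltiA; have ltiK := leq_trans ltiA leAK.
have := congr1 (fun c : {ffun 'I_K -> bool} => c (Ordinal ltiK)) code_eq.
by rewrite !ffunE /= (nth_map v1) // (nth_map v2) ?sizeA.
Qed.

Definition emb_on (A1 : seq T1) (A2 : seq T2) (X1 : seq T1) (X2 : seq T2) (h : T1 -> T2) :=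
  [/\ {in X1, forall x, h x \in X2},
      {in X1 &, injective h},
      {in X1 &, forall x y, e1 x y = e2 (h x) (h y)},
      {in X1, forall x, le (lab1 x) (lab2 (h x))} &
      {in X1, forall x i, i < size A1 -> e1 x (nth x A1 i) = e2 (h x) (nth (h x) A2 i)}].

Lemma emb_on_sub A1 A2 X1 X2 X2' h :
  {subset X2 <= X2'} -> emb_on A1 A2 X1 X2 h -> emb_on A1 A2 X1 X2' h.
Proof. by move=> sub [hX ? ? ? ?]; split => // x /hX/sub. Qed.

Lemma emb_on_cat A1 A2 X1 Y1 X2 Y2 hX hY :
  uniq (X1 ++ Y1) -> uniq (X2 ++ Y2) ->
  (forall x y, x \in X1 -> y \in Y1 -> ~~ e1 x y) ->
  (forall x y, x \in X2 -> y \in Y2 -> ~~ e2 x y) ->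
  emb_on A1 A2 X1 X2 hX -> emb_on A1 A2 Y1 Y2 hY ->
  emb_on A1 A2 (X1 ++ Y1) (X2 ++ Y2) (fun x => if x \in X1 then hX x else hY x).
Proof.
rewrite !cat_uniq => /and3P[_ disj1 _] /and3P[_ disj2 _] no_edge1 no_edge2.
move=> [hX_in hX_inj hX_adj hX_lab hX_anc] [hY_in hY_inj hY_adj hY_lab hY_anc].
have notX1 y : y \in Y1 -> y \notin X1 by move=> yY; apply: (hasPn disj1).
have notX2 y : y \in Y2 -> y \notin X2 by move=> yY; apply: (hasPn disj2).
have X1_or_Y1 : forall x, x \in X1 ++ Y1 -> x \in X1 \/ (x \in Y1 /\ x \notin X1).
  by move=> x; rewrite mem_cat => /orP[xX|xY]; [left|right; split; last apply: notX1].
split.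
- move=> x /X1_or_Y1[xX|[xY /negbTE->]]; rewrite ?xX mem_cat ?hX_in //.
  by rewrite hY_in ?orbT.
- move=> x y /X1_or_Y1[xX|[xY /negbTE->]] /X1_or_Y1[yX|[yY /negbTE->]]; rewrite ?xX ?yX.
  + exact: hX_inj.
  + by move=> hxy; have := notX2 _ (hY_in _ yY); rewrite -hxy hX_in.
  + by move=> hxy; have := notX2 _ (hY_in _ xY); rewrite hxy hX_in.
  + exact: hY_inj.
- move=> x y /X1_or_Y1[xX|[xY /negbTE->]] /X1_or_Y1[yX|[yY /negbTE->]]; rewrite ?xX ?yX.
  + exact: hX_adj.
  + by rewrite (negbTE (no_edge1 _ _ xX yY)) (negbTE (no_edge2 _ _ (hX_in _ xX) (hY_in _ yY))).
  + rewrite e1_sym e2_sym (negbTE (no_edge1 _ _ yX xY)).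
    by rewrite (negbTE (no_edge2 _ _ (hX_in _ yX) (hY_in _ xY))).
  + exact: hY_adj.
- by move=> x /X1_or_Y1[xX|[xY /negbTE->]]; rewrite ?xX; [apply: hX_lab | apply: hY_lab].
- by move=> x /X1_or_Y1[xX|[xY /negbTE->]]; rewrite ?xX; [apply: hX_anc | apply: hY_anc].
Qed.

Lemma emb_on_cons r1 r2 A1 A2 X1 X2 h :
  r1 \notin X1 -> r2 \notin X2 -> le (lab1 r1) (lab2 r2) ->
  (forall i, i < size A1 -> e1 r1 (nth r1 A1 i) = e2 r2 (nth r2 A2 i)) ->
  emb_on (r1 :: A1) (r2 :: A2) X1 X2 h ->
  emb_on A1 A2 (r1 :: X1) (r2 :: X2) (fun x => if x == r1 then r2 else h x).
Proof.
move=> r1X1 r2X2 le_r anc_r [h_in h_inj h_adj h_lab h_anc].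
have neq_r1 x : x \in X1 -> (x == r1) = false by move=> xX; apply: contraNF r1X1 => /eqP<-.
have neq_r2 x : x \in X1 -> (h x == r2) = false.
  by move=> xX; apply: contraNF r2X2 => /eqP<-; apply: h_in.
have adj_r x : x \in X1 -> e1 x r1 = e2 (h x) r2 by move=> xX; apply: (h_anc x xX 0).
have root_or_X1 x : x \in r1 :: X1 -> x = r1 \/ x \in X1 by rewrite inE => /predU1P.
split.
- by move=> x /root_or_X1[->|xX]; rewrite ?eqxx ?mem_head // neq_r1 // inE h_in ?orbT.
- move=> x y /root_or_X1[->|xX] /root_or_X1[->|yX]; rewrite ?eqxx ?neq_r1 //.
  + by move=> r2_hy; have := neq_r2 _ yX; rewrite -r2_hy eqxx.
  + by move=> hx_r2; have := neq_r2 _ xX; rewrite hx_r2 eqxx.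
  + exact: h_inj.
- move=> x y /root_or_X1[->|xX] /root_or_X1[->|yX]; rewrite ?eqxx ?neq_r1 //.
  + by rewrite e1_irr e2_irr.
  + by rewrite e1_sym e2_sym adj_r.
  + by rewrite adj_r.
  + exact: h_adj.
- by move=> x /root_or_X1[->|xX]; rewrite ?eqxx // neq_r1 //; apply: h_lab.
- move=> x /root_or_X1[->|xX] i ltiA; rewrite ?eqxx; first exact: anc_r.
  by rewrite neq_r1 //; apply: (h_anc x xX i.+1).
Qed.

Local Notation encode1 := (encode K e1 lab1).
Local Notation encode2 := (encode K e2 lab2).

Definition liftable d := forall t1 t2 (A1 : seq T1) (A2 : seq T2),
  elim_tree e1 d t1 -> elim_tree e2 d t2 -> size A1 + d <= K -> size A2 = size A1 ->
  tree_emb code_le d (encode1 A1 t1) (encode2 A2 t2) ->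
  exists h, emb_on A1 A2 (tree_verts t1) (tree_verts t2) h.

Lemma forest_lift d (v0 : T2) ts1 ts2 (A1 : seq T1) (A2 : seq T2) :
  liftable d -> elim_forest e1 d ts1 -> elim_forest e2 d ts2 ->
  size A1 + d <= K -> size A2 = size A1 ->
  seq_emb (tree_emb code_le d) (map (encode1 A1) ts1) (map (encode2 A2) ts2) ->
  exists h, emb_on A1 A2 (forest_verts ts1) (forest_verts ts2) h.
Proof.
move=> lift_d + + leAK sizeA /seq_emb_map.
elim: ts2 ts1 => [|t2 ts2 IHts2] [|t1 ts1] //=; try by exists (fun=> v0).
move=> [[elim_t1 elim_ts1] uniq1 [no_edge1 cross1]] [[elim_t2 elim_ts2] uniq2 [no_edge2 cross2]].
have uniq_ts2 : uniq (forest_verts ts2) by move: uniq2; rewrite cat_uniq => /and3P[].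
case=> [[emb_t emb_ts]|emb_ts].
  have uniq_ts1 : uniq (forest_verts ts1) by move: uniq1; rewrite cat_uniq => /and3P[].
  have [ht emb_ht] := lift_d _ _ _ _ elim_t1 elim_t2 leAK sizeA emb_t.
  have [hs emb_hs] :=
    IHts2 ts1 (And3 elim_ts1 uniq_ts1 cross1) (And3 elim_ts2 uniq_ts2 cross2) emb_ts.
  by eexists; apply: emb_on_cat uniq1 uniq2 no_edge1 no_edge2 emb_ht emb_hs.
have [h emb_h] := IHts2 (t1 :: ts1) (And3 (conj elim_t1 elim_ts1) uniq1 (conj no_edge1 cross1))
  (And3 elim_ts2 uniq_ts2 cross2) emb_ts.
by exists h; apply: emb_on_sub emb_h => x; rewrite /forest_verts /= mem_cat orbC => ->.
Qed.

Lemma tree_lift d : liftable d.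
Proof.
elim: d => [|d IHd] [r1 ts1] [r2 ts2] A1 A2 //= [elim_ts1 uniq1 cross1] [elim_ts2 uniq2 cross2].
move=> leAK sizeA [[le_r code_eq] emb_ts].
move: uniq1 uniq2 => /andP[r1_ts1 uniq1] /andP[r2_ts2 uniq2].
have leAK' : size (r1 :: A1) + d <= K by rewrite /= addSnnS.
have [h emb_h] := forest_lift r2 IHd (And3 elim_ts1 uniq1 cross1) (And3 elim_ts2 uniq2 cross2)
  leAK' (congr1 succn sizeA : size (r2 :: A2) = size (r1 :: A1)) emb_ts.
exists (fun x => if x == r1 then r2 else h x); apply: emb_on_cons emb_h => //.
by apply: adj_code_nth code_eq sizeA _; apply: leq_trans leAK; apply: leq_addr.
Qed.

End Lift.

Section InducedSubgraphOrder.
Variables (S : Type) (le : S -> S -> Prop).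

Lemma sg_le_refl : (forall a, le a a) -> forall g, sg_le le g g.
Proof. by move=> le_refl g; exists id; split => // u; apply: le_refl. Qed.

Lemma sg_le_trans : (forall a b c, le a b -> le b c -> le a c) ->
  forall g1 g2 g3, sg_le le g1 g2 -> sg_le le g2 g3 -> sg_le le g1 g3.
Proof.
move=> trans_le g1 g2 g3 [h1 [inj1 [adj1 lab1]]] [h2 [inj2 [adj2 lab2]]].
exists (h2 \o h1); split; first exact: inj_comp.
by split=> [u v|u]; [rewrite adj1 adj2 | apply: trans_le (lab1 u) (lab2 _)].
Qed.

Lemma sg_le_of_forests K d (g1 g2 : sgraph S) ts1 ts2 :
  undirected g1 -> undirected g2 -> d <= K ->
  elim_forest (@adj S g1) d ts1 -> elim_forest (@adj S g2) d ts2 ->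
  (forall x, x \in forest_verts ts1) ->
  seq_emb (tree_emb (@code_le _ le K) d)
    (map (encode K (@adj S g1) (@lab S g1) [::]) ts1)
    (map (encode K (@adj S g2) (@lab S g2) [::]) ts2) ->
  sg_le le g1 g2.
Proof.
move=> [sym1 irr1] [sym2 irr2] leK elim1 elim2 cover.
case: ts2 elim2 => [|[v0 ts0] ts2] elim2 emb12.
  case: ts1 cover emb12 elim1 => // cover _ _.
  have void (x : 'I_(nv g1)) : False by have := cover x.
  by exists (fun x => match void x with end); split; [|split] => x; case: (void x).
have [h [_ h_inj h_adj h_lab _]] :=
  forest_lift sym1 sym2 v0 (@tree_lift _ _ _ _ _ _ _ _ _ sym1 sym2 irr1 irr2 d)
    elim1 elim2 (leK : size [::] + d <= K) (erefl : size [::] = size [::]) emb12.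
exists h; split; first by move=> x y; apply: h_inj.
by split=> [x y|x]; [apply: h_adj | apply: h_lab].
Qed.

End InducedSubgraphOrder.

Theorem lemma15 (S : Type) (le : S -> S -> Prop) (k : nat) :
  wqo le -> wqo_on (@kpb_sgraph S k) (sg_le le).
Proof.
move=> wqo_le; have [le_refl [le_trans _]] := wqo_le.
split; first by move=> g _; apply: sg_le_refl => a; apply: le_refl.
split; first by move=> g1 g2 g3 _ _ _; apply: sg_le_trans => a b c; apply: le_trans.
move=> f kpb_f.
pose covering i ts := elim_forest (@adj S (f i)) k.+1 ts /\ forall x, x \in forest_verts ts.
pose F i := epsilon (inhabits [::]) (covering i).
have FP i : covering i (F i).
  apply: epsilon_spec; have [[sym _] short] := kpb_f i.
  by have [ts ? ?] := elim_forest_of_short_paths sym short; exists ts.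
pose G i := map (encode k.+1 (@adj S (f i)) (@lab S (f i)) [::]) (F i).
have codes_wqo := wqo_prod wqo_le (@wqo_eq_finType {ffun 'I_k.+1 -> bool}).
have [_ [_ good]] := higman (tree_emb_wqo k.+1 codes_wqo).
have [|i [j [lt_ij emb_ij]]] := good G.
  move=> i; have [[elim_Fi _ _] _] := FP i.
  by apply: all_prop_map elim_Fi => t; apply: encode_tree_on.
exists i, j; split => //.
by apply: sg_le_of_forests (kpb_f i).1 (kpb_f j).1 (leqnn _) (FP i).1 (FP j).1 (FP i).2 emb_ij.
Qed.
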